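(* Let $n\in\mathbb{N}$, $m\in\mathbb{N}_0$, and suppose $L_n^{(m)}$ has a rational root $\bar x$. Then $\bar x\in\mathbb{N}$. Moreover, if $\bar x\in\mathbb{N}$ has prime factorization $\bar x=p_1^{n_1}\cdots p_k^{n_k}$, then $L_n^{(m)}(\bar x)=0$ is possible only if $n=p_1^{l_1}\cdots p_k^{l_k}$ for some $l_1,\dots,l_k\in\mathbb{N}_0$.
   Context: Generalized Laguerre polynomials: $L_n^{(\alpha)}(x)=\sum_{j=0}^n(-1)^j\binom{n+\alpha}{n-j}\frac{x^j}{j!}$. *)

From HB Require Import structures.
From mathcomp Require Import all_boot all_order all_algebra.
Set Implicit Arguments. Unset Strict Implicit. Unset Printing Implicit Defensive.
Import Order.TTheory GRing.Theory Num.Theory.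
Local Open Scope ring_scope.

Definition laguerre (n m : nat) : {poly rat} :=
  \sum_(j < n.+1)
     (((-1) ^+ j * ('C(n + m, n - j))%:R / (j`!)%:R) *: 'X^j).

From HB Require Import structures.
From mathcomp Require Import all_boot all_order all_algebra.
From mathcomp Require Import ring.
Set Implicit Arguments. Unset Strict Implicit. Unset Printing Implicit Defensive.
Import Order.TTheory GRing.Theory Num.Theory.
Local Open Scope ring_scope.

(* The integer n`! L_n^(m) has coefficients (-1)^j 'C(n + m, n - j) n`!/j`!
   and leading coefficient (-1)^n, so by the rational root theorem every
   rational root of L_n^(m) is an integer a.  For j < n the factor
   n`!/j`! = n (n - 1) ... (j + 1) is divisible by n, so the root equation
   yields n | a^n, whence every prime factor of n divides a.  Finally the
   coefficients alternate in sign and the constant one is positive, so no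
   a <= 0 is a root. *)

Section HomogeneousHorner.

Variable p : {poly int}.

Local Notation d := (size p).-1.

Definition horner_hom (a b : int) : int :=
  \sum_(i < size p) p`_i * a ^+ i * b ^+ (d - i).

Lemma horner_hom1 (a : int) : horner_hom a 1 = p.[a].
Proof. by rewrite horner_coef; apply: eq_bigr => i _; rewrite expr1n mulr1. Qed.

Lemma horner_homE (a b : int) : b != 0 ->
  (horner_hom a b)%:~R = (map_poly intr p).[a%:~R / b%:~R] * b%:~R ^+ d :> rat.
Proof.
move=> b_neq0; have bR_neq0 : b%:~R != 0 :> rat by rewrite intr_eq0.
rewrite horner_coef size_map_inj_poly //; last exact: intr_inj.
rewrite rmorph_sum mulr_suml; apply: eq_bigr => -[i /= lt_i_p] _.
have le_i_d : (i <= d)%N by rewrite -ltnS prednK // (leq_ltn_trans _ lt_i_p).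
rewrite coef_map /= !rmorphM !rmorphXn /= -{2}(subnKC le_i_d) exprD expr_div_n.
by field; rewrite expf_neq0.
Qed.

Lemma dvdz_lead_horner_hom (a b c : int) : horner_hom a b = 0 ->
    (forall i, (i < d)%N -> (c %| p`_i * b ^+ (d - i))%Z) ->
  (c %| lead_coef p * a ^+ d)%Z.
Proof.
rewrite /horner_hom lead_coefE; case sp: (size p) => [|s] /= => [_ _|].
  by rewrite nth_default ?sp // mul0r dvdz0.
rewrite big_ord_recr /= subnn expr0 mulr1 => /eqP; rewrite addr_eq0 => /eqP.
move=> /(congr1 -%R); rewrite opprK => <- dvd_c.
rewrite rpredN rpred_sum // => -[i /= lt_i_s] _.
by rewrite mulrAC dvdz_mulr ?dvd_c.
Qed.

End HomogeneousHorner.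

Lemma denq_dvd_lead_coef (p : {poly int}) (x : rat) :
  root (map_poly intr p) x -> (denq x %| lead_coef p)%Z.
Proof.
move=> /rootP px0; set a := numq x; set b := denq x.
have b_neq0 : b != 0 by rewrite gt_eqF ?denq_gt0.
have hom0 : horner_hom p a b = 0.
  by apply: (@intr_inj rat); rewrite horner_homE // divq_num_den px0 mul0r.
have coprime_b_an : coprimez b (a ^+ (size p).-1).
  by apply: coprimezXr; rewrite coprimez_sym; apply: coprime_num_den.
rewrite -(Gauss_dvdzl _ coprime_b_an).
apply: dvdz_lead_horner_hom hom0 _ => i lt_i_d.
by rewrite dvdz_mull // dvdz_exp ?subn_gt0.
Qed.

Lemma rat_root_unit_lead_coef (p : {poly int}) (x : rat) :
  lead_coef p \is a GRing.unit -> root (map_poly intr p) x -> x = (numq x)%:~R.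
Proof.
move=> /unitrP[u [_ lead_u1]] /denq_dvd_lead_coef /(dvdz_mulr u).
rewrite lead_u1 dvdzE dvdn1 => /eqP den1.
rewrite -{1}[x]divq_num_den.
have -> : denq x = 1 by rewrite -[denq x]gtr0_norm ?denq_gt0 // -abszE den1.
by rewrite divr1.
Qed.

Lemma dvdz_lead_coef_root (p : {poly int}) (a c : int) :
    root p a -> (forall i, (i < (size p).-1)%N -> (c %| p`_i)%Z) ->
  (c %| lead_coef p * a ^+ (size p).-1)%Z.
Proof.
move=> /rootP pa0 dvd_c; apply: (@dvdz_lead_horner_hom p a 1).
  by rewrite horner_hom1.
by move=> i /dvd_c; rewrite expr1n mulr1.
Qed.

Lemma horner_alternating_gt0 (R : realDomainType) (p : {poly R}) (x : R) :
  x <= 0 -> 0 < p`_0 -> (forall i, 0 <= (-1) ^+ i * p`_i) -> 0 < p.[x].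
Proof.
move=> x_le0 p0_gt0 alt.
have: size p != 0%N.
  by rewrite size_poly_eq0; apply: contraTneq p0_gt0 => ->; rewrite coef0 ltxx.
case sp: (size p) => [//|s] _.
rewrite horner_coef sp big_ord_recl /= expr0 mulr1.
apply: ltr_pwDl => //; apply: sumr_ge0 => i _.
by rewrite -[x]opprK exprNn mulrCA mulrA mulr_ge0 // exprn_ge0 // oppr_ge0.
Qed.

Definition laguerre_scaled (n m : nat) : {poly int} :=
  \poly_(j < n.+1) ((-1) ^+ j * ('C(n + m, n - j) * n ^_ (n - j))%:R).

Lemma map_laguerre_scaled (n m : nat) :
  map_poly intr (laguerre_scaled n m) = n`!%:R *: laguerre n m.
Proof.
have -> : laguerre n m =
    \poly_(j < n.+1) ((-1) ^+ j * 'C(n + m, n - j)%:R / j`!%:R) by rewrite poly_def.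
apply/polyP => j; rewrite coef_map coefZ !coef_poly /=.
case: ltnP => [|_]; last by rewrite mulr0.
rewrite ltnS => le_j_n; rewrite rmorphM rmorphXn rmorphN1 /= rmorph_nat natrM.
rewrite -(ffact_fact (leq_subr j n)) subKn // natrM.
have fact_neq0 : j`!%:R != 0 :> rat by rewrite pnatr_eq0 -lt0n fact_gt0.
by field.
Qed.

Lemma coef_laguerre_scaled (n m j : nat) :
  (laguerre_scaled n m)`_j =
    if (j <= n)%N then (-1) ^+ j * ('C(n + m, n - j) * n ^_ (n - j))%:R else 0.
Proof. by rewrite coef_poly ltnS. Qed.

Lemma lead_coef_laguerre_scaled (n m : nat) :
  lead_coef (laguerre_scaled n m) = (-1) ^+ n.
Proof.
by rewrite lead_coef_poly //= subnn bin0 ffactn0 mulr1 // signr_eq0.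
Qed.

Lemma size_laguerre_scaled (n m : nat) : size (laguerre_scaled n m) = n.+1.
Proof. by rewrite size_poly_eq //= subnn bin0 ffactn0 mulr1 signr_eq0. Qed.

Lemma dvdz_coef_laguerre_scaled (n m j : nat) :
  (j < n)%N -> (n%:Z %| (laguerre_scaled n m)`_j)%Z.
Proof.
move=> lt_j_n; rewrite coef_laguerre_scaled ltnW //.
have [k ->] : exists k, (n - j)%N = k.+1 by exists (n - j.+1)%N; rewrite subnSK.
by rewrite ffactnS mulnCA natrM dvdz_mull // dvdz_mulr // natz.
Qed.

Lemma horner_laguerre_scaled_gt0 (n m : nat) (a : int) :
  a <= 0 -> 0 < (laguerre_scaled n m).[a].
Proof.
move=> a_le0; apply: horner_alternating_gt0 => // [|i].
  rewrite coef_laguerre_scaled expr0 mul1r subn0 ltr0n.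
  by rewrite muln_gt0 bin_gt0 leq_addr ffact_gt0 leqnn.
rewrite coef_laguerre_scaled; case: leqP => _; last by rewrite mulr0.
by rewrite mulrA -expr2 exprAC sqrrN !expr1n mul1r ler0n.
Qed.

Theorem proposition5 (n m : nat) (x : rat) :
  (0 < n)%N -> root (laguerre n m) x ->
  exists k : nat,
    [/\ (0 < k)%N, x = k%:R &
        forall p : nat, prime p -> (p %| n)%N -> (p %| k)%N].
Proof.
move=> _ root_x.
have root_scaled : root (map_poly intr (laguerre_scaled n m)) x.
  by rewrite map_laguerre_scaled rootZ // pnatr_eq0 -lt0n fact_gt0.
have lead_unit : lead_coef (laguerre_scaled n m) \is a GRing.unit.
  by rewrite lead_coef_laguerre_scaled unitrX // unitrN1.
have x_int := rat_root_unit_lead_coef lead_unit root_scaled.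
set a := numq x in x_int.
have root_a : root (laguerre_scaled n m) a.
  by move: root_scaled; rewrite x_int /root horner_map intr_eq0.
have a_gt0 : 0 < a.
  rewrite ltNge; apply/negP => /(horner_laguerre_scaled_gt0 n m).
  by rewrite (rootP root_a) ltxx.
have n_dvd_an : (n %| `|a| ^ n)%N.
  have := @dvdz_lead_coef_root _ _ n%:Z root_a.
  rewrite size_laguerre_scaled lead_coef_laguerre_scaled rpredMsign dvdzE abszX.
  by apply; apply: dvdz_coef_laguerre_scaled.
exists `|a|%N; split.
- by rewrite absz_gt0 gt_eqF.
- by rewrite x_int -[a]gtr0_norm // -abszE.
- move=> p p_prime p_dvd_n.
  by move: (dvdn_trans p_dvd_n n_dvd_an); rewrite Euclid_dvdX // => /andP[].
Qed.
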